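(* Let $X$ be an infinite dimensional real Banach space. Then there is a closed convex set $K$ contained in the open unit ball $\{x\in X:\|x\|<1\}$ of $X$ such that $\sup\{\|x\|: x\in K\}=1$. *)

From Stdlib Require Import Reals.
Open Scope R_scope.

Record BanachSpace := {
  carrier :> Type;
  vzero : carrier;
  vadd : carrier -> carrier -> carrier;
  vopp : carrier -> carrier;
  vscal : R -> carrier -> carrier;
  vnorm : carrier -> R;
  vadd_assoc : forall x y z, vadd x (vadd y z) = vadd (vadd x y) z;
  vadd_comm : forall x y, vadd x y = vadd y x;
  vadd_0 : forall x, vadd x vzero = x;
  vadd_opp : forall x, vadd x (vopp x) = vzero;
  vscal_1 : forall x, vscal 1 x = x;
  vscal_assoc : forall a b x, vscal a (vscal b x) = vscal (a * b) x;
  vscal_distr_v : forall a x y, vscal a (vadd x y) = vadd (vscal a x) (vscal a y);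
  vscal_distr_s : forall a b x, vscal (a + b) x = vadd (vscal a x) (vscal b x);
  vnorm_eq0 : forall x, vnorm x = 0 -> x = vzero;
  vnorm_scal : forall a x, vnorm (vscal a x) = Rabs a * vnorm x;
  vnorm_triangle : forall x y, vnorm (vadd x y) <= vnorm x + vnorm y;
  vcomplete : forall u : nat -> carrier,
    (forall eps, eps > 0 -> exists N, forall n m, (n >= N)%nat -> (m >= N)%nat ->
       vnorm (vadd (u n) (vopp (u m))) < eps) ->
    exists l, forall eps, eps > 0 -> exists N, forall n, (n >= N)%nat ->
       vnorm (vadd (u n) (vopp l)) < eps
}.

Arguments vzero {_}. Arguments vadd {_}. Arguments vopp {_}.
Arguments vscal {_}. Arguments vnorm {_}.

Fixpoint lin_comb (X : BanachSpace) (c : nat -> R) (v : nat -> X) (n : nat) : X :=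
  match n with
  | O => vzero
  | S k => vadd (lin_comb X c v k) (vscal (c k) (v k))
  end.

Definition infinite_dimensional (X : BanachSpace) : Prop :=
  forall n : nat, exists v : nat -> X,
    forall c : nat -> R, lin_comb X c v n = vzero ->
      forall i, (i < n)%nat -> c i = 0.

Definition converges_to (X : BanachSpace) (u : nat -> X) (l : X) : Prop :=
  forall eps, eps > 0 -> exists N, forall n, (n >= N)%nat ->
    vnorm (vadd (u n) (vopp l)) < eps.

(* closed = sequentially closed (equivalent in metric spaces) *)
Definition is_closed (X : BanachSpace) (K : X -> Prop) : Prop :=
  forall (u : nat -> X) (l : X), (forall n, K (u n)) -> converges_to X u l -> K l.

Definition is_convex (X : BanachSpace) (K : X -> Prop) : Prop :=
  forall x y t, K x -> K y -> 0 <= t <= 1 ->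
    K (vadd (vscal t x) (vscal (1 - t) y)).

From Stdlib Require Import Reals Lra Lia Psatz ZArith Classical ClassicalEpsilon Cantor.
Open Scope R_scope.

(* The set is cut out by countably many convex constraints
       K = { x | forall n, ||x|| + psi_n(x) / (n+2) <= 1 },
   where (psi_n) is an "admissible family": nonnegative, 1-Lipschitz, convex
   functions below the norm which (a) have no common zero except at norm 0, and
   (b) for each N have a common zero among psi_0, ..., psi_{N-1} on the unit
   sphere.  (a) forces every point of K into the open ball; (b) puts the points
   (1 - 1/(N+2)) u of norm close to 1 into K.

   Pick a
   countable family gen whose span V contains n independent vectors for every n,
   and a countable dense subset (d_n) of V.  A Hahn-Banach extension along the
   countable chain of finite-dimensional subspaces of V yields norm-one linear
   functionals phi_n on V norming d_n; then psi_n is the infimal convolution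
       psi_n(x) = inf_{v in V} |phi_n v| + ||x - v||.
   Density of (d_n) gives (a); since N functionals vanish simultaneously on some
   nonzero combination of N+1 independent vectors, (b) holds as well. *)

Arguments vadd_assoc {_}. Arguments vadd_comm {_}. Arguments vadd_0 {_}.
Arguments vadd_opp {_}. Arguments vscal_1 {_}. Arguments vscal_assoc {_}.
Arguments vscal_distr_v {_}. Arguments vscal_distr_s {_}. Arguments vnorm_eq0 {_}.
Arguments vnorm_scal {_}. Arguments vnorm_triangle {_}.

Section VectorAlgebra.
Context {X : BanachSpace}.

Definition vsub (x y : X) : X := vadd x (vopp y).

Lemma vadd_0l (x : X) : vadd vzero x = x.
Proof. rewrite vadd_comm; apply vadd_0. Qed.

Lemma vadd_opp_l (x : X) : vadd (vopp x) x = vzero.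
Proof. rewrite vadd_comm; apply vadd_opp. Qed.

Lemma vadd_cancel_l (a b c : X) : vadd a b = vadd a c -> b = c.
Proof.
  intros H. rewrite <- (vadd_0l b), <- (vadd_0l c), <- (vadd_opp_l a),
    <- !vadd_assoc, H. reflexivity.
Qed.

Lemma vscal_0l (x : X) : vscal 0 x = vzero.
Proof.
  apply (vadd_cancel_l (vscal 0 x)).
  rewrite <- vscal_distr_s, Rplus_0_r, vadd_0. reflexivity.
Qed.

Lemma vscal_0r (a : R) : vscal a (@vzero X) = vzero.
Proof.
  apply (vadd_cancel_l (vscal a vzero)).
  rewrite <- vscal_distr_v, !vadd_0. reflexivity.
Qed.

Lemma vopp_scal (x : X) : vopp x = vscal (-1) x.
Proof.
  apply (vadd_cancel_l x). rewrite vadd_opp.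
  rewrite <- (vscal_1 x) at 1. rewrite <- vscal_distr_s.
  replace (1 + -1) with 0 by ring. rewrite vscal_0l. reflexivity.
Qed.

Lemma vnorm_0 : vnorm (@vzero X) = 0.
Proof. rewrite <- (vscal_0l (@vzero X)), vnorm_scal, Rabs_R0. ring. Qed.

Lemma vnorm_opp (x : X) : vnorm (vopp x) = vnorm x.
Proof.
  rewrite vopp_scal, vnorm_scal, Rabs_left by lra. ring.
Qed.

Lemma vnorm_nonneg (x : X) : 0 <= vnorm x.
Proof.
  pose proof (vnorm_triangle x (vopp x)) as H.
  rewrite vadd_opp, vnorm_0, vnorm_opp in H. lra.
Qed.

Lemma vnorm_pos (x : X) : x <> vzero -> 0 < vnorm x.
Proof.
  intros H. destruct (vnorm_nonneg x) as [H1|H1]; auto.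
  exfalso; apply H, vnorm_eq0; auto.
Qed.

Lemma vopp_add (a b : X) : vopp (vadd a b) = vadd (vopp a) (vopp b).
Proof. rewrite !vopp_scal, vscal_distr_v. reflexivity. Qed.

Lemma vopp_opp (a : X) : vopp (vopp a) = a.
Proof.
  rewrite !vopp_scal, vscal_assoc. replace (-1 * -1) with 1 by ring. apply vscal_1.
Qed.

Lemma vadd_swap4 (a b c d : X) :
  vadd (vadd a b) (vadd c d) = vadd (vadd a c) (vadd b d).
Proof.
  rewrite <- !vadd_assoc. f_equal. rewrite !vadd_assoc. f_equal. apply vadd_comm.
Qed.

Lemma vadd_rcomm (a b c : X) : vadd (vadd a b) c = vadd (vadd a c) b.
Proof. rewrite <- !vadd_assoc. f_equal. apply vadd_comm. Qed.

Lemma vsub_self (x : X) : vsub x x = vzero.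
Proof. apply vadd_opp. Qed.

Lemma vsub_0r (x : X) : vsub x vzero = x.
Proof. unfold vsub. rewrite vopp_scal, vscal_0r. apply vadd_0. Qed.

Lemma vadd_sub (x y : X) : vadd y (vsub x y) = x.
Proof. unfold vsub. rewrite vadd_comm, <- vadd_assoc, vadd_opp_l. apply vadd_0. Qed.

Lemma vsub_add (a b c d : X) :
  vsub (vadd a b) (vadd c d) = vadd (vsub a c) (vsub b d).
Proof. unfold vsub. rewrite vopp_add, vadd_swap4. reflexivity. Qed.

Lemma vsub_scal (t : R) (a b : X) : vsub (vscal t a) (vscal t b) = vscal t (vsub a b).
Proof.
  unfold vsub. rewrite !vopp_scal, vscal_distr_v, !vscal_assoc.
  f_equal. f_equal. ring.
Qed.

Lemma vsub_scal_diff (a q : R) (x r : X) :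
  vsub (vscal a x) (vscal q r) = vadd (vscal a (vsub x r)) (vscal (a - q) r).
Proof.
  unfold vsub. rewrite !vopp_scal, vscal_distr_v, !vscal_assoc.
  rewrite <- vadd_assoc. f_equal. rewrite <- vscal_distr_s. f_equal. ring.
Qed.

Lemma norm_sub_tri (x y v : X) :
  vnorm (vsub x v) <= vnorm (vsub x y) + vnorm (vsub y v).
Proof.
  replace (vsub x v) with (vadd (vsub x y) (vsub y v)); [apply vnorm_triangle|].
  unfold vsub. rewrite <- vadd_assoc. f_equal.
  rewrite vadd_assoc, vadd_opp_l, vadd_0l. reflexivity.
Qed.

Lemma norm_sub_sym (x y : X) : vnorm (vsub x y) = vnorm (vsub y x).
Proof.
  rewrite <- vnorm_opp. unfold vsub. rewrite vopp_add, vopp_opp, vadd_comm. reflexivity.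
Qed.

Lemma norm_le_sub (x y : X) : vnorm x <= vnorm y + vnorm (vsub x y).
Proof. rewrite <- (vadd_sub x y) at 1. apply vnorm_triangle. Qed.

Lemma norm_convex (t s : R) (x y : X) : 0 <= t -> 0 <= s ->
  vnorm (vadd (vscal t x) (vscal s y)) <= t * vnorm x + s * vnorm y.
Proof.
  intros Ht Hs. eapply Rle_trans; [apply vnorm_triangle|].
  rewrite !vnorm_scal, !Rabs_pos_eq by lra. lra.
Qed.

End VectorAlgebra.

Lemma le_eps (a b : R) : (forall eps, 0 < eps -> a <= b + eps) -> a <= b.
Proof.
  intros H. destruct (Rle_or_lt a b) as [|Hlt]; auto.
  specialize (H ((a - b) / 2)). lra.
Qed.

Lemma arch (eta : R) : 0 < eta -> exists N, / INR (S N) < eta.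
Proof.
  intros He. destruct (archimed (/ eta)) as [A1 A2].
  assert (Hinv : 0 < / eta) by (apply Rinv_0_lt_compat; auto).
  assert (Hu : (0 < up (/ eta))%Z) by (apply lt_0_IZR; lra).
  exists (Z.to_nat (up (/ eta))).
  assert (E : INR (S (Z.to_nat (up (/ eta)))) = IZR (up (/ eta)) + 1).
  { rewrite S_INR, INR_IZR_INZ. f_equal. f_equal. lia. }
  rewrite E. rewrite <- (Rinv_inv eta) at 2.
  apply Rinv_lt_contravar. apply Rmult_lt_0_compat; lra. lra.
Qed.

Definition weight (n : nat) : R := / INR (S (S n)).

Lemma weight_bounds (n : nat) : 0 < weight n <= 1.
Proof.
  unfold weight. assert (H : 1 <= INR (S (S n))) by (rewrite <- INR_1; apply le_INR; lia).
  split; [apply Rinv_0_lt_compat; lra|].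
  rewrite <- Rinv_1. apply Rinv_le_contravar; lra.
Qed.

Lemma weight_antitone (n m : nat) : (n <= m)%nat -> weight m <= weight n.
Proof.
  intros H. apply Rinv_le_contravar; [apply lt_0_INR; lia | apply le_INR; lia].
Qed.

Lemma weight_small (eta : R) : 0 < eta -> exists N, weight N < eta.
Proof.
  intros He. destruct (arch eta He) as [N HN]. exists N.
  apply Rle_lt_trans with (/ INR (S N)); auto.
  apply Rinv_le_contravar; [apply lt_0_INR; lia | apply le_INR; lia].
Qed.

Record admissible (X : BanachSpace) (psi : nat -> X -> R) : Prop := {
  adm_nonneg : forall n x, 0 <= psi n x;
  adm_le_norm : forall n x, psi n x <= vnorm x;
  adm_lipschitz : forall n x y, psi n x <= psi n y + vnorm (vsub x y);
  adm_convex : forall n x y t, 0 <= t <= 1 ->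
    psi n (vadd (vscal t x) (vscal (1 - t) y)) <= t * psi n x + (1 - t) * psi n y;
  adm_separating : forall x, (forall n, psi n x <= 0) -> vnorm x = 0;
  adm_common_zero : forall N, exists u, vnorm u = 1 /\ forall n, (n < N)%nat -> psi n u = 0
}.

Definition ball_set {X : BanachSpace} (psi : nat -> X -> R) (x : X) : Prop :=
  forall n, vnorm x + weight n * psi n x <= 1.

Section BallSet.
Context {X : BanachSpace} (psi : nat -> X -> R).
Hypothesis Hpsi : admissible X psi.

(* Each constraint is continuous (Lipschitz), so K is closed. *)
Lemma ball_set_closed : is_closed X (ball_set psi).
Proof.
  intros u l Hu Hc n. apply le_eps. intros eps He.
  destruct (Hc (eps / 2)) as [N HN]; [lra|].
  specialize (HN N (le_n N)). change (vnorm (vsub (u N) l) < eps / 2) in HN.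
  rewrite norm_sub_sym in HN.
  pose proof (Hu N n) as HuN.
  pose proof (norm_le_sub l (u N)).
  pose proof (adm_lipschitz X psi Hpsi n l (u N)) as Lip.
  pose proof (weight_bounds n) as [w0 w1].
  pose proof (adm_nonneg X psi Hpsi n l).
  assert (weight n * psi n l <= weight n * psi n (u N) + vnorm (vsub l (u N))); [|lra].
  pose proof (vnorm_nonneg (vsub l (u N))). nra.
Qed.

(* Each constraint is a sum of convex functions, so K is convex. *)
Lemma ball_set_convex : is_convex X (ball_set psi).
Proof.
  intros x y t Hx Hy Ht n.
  pose proof (norm_convex t (1 - t) x y ltac:(lra) ltac:(lra)) as Nz.
  pose proof (adm_convex X psi Hpsi n x y t Ht) as Cz.
  pose proof (weight_bounds n) as [w0 w1].
  specialize (Hx n). specialize (Hy n). nra.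
Qed.

(* If some psi_n(x) > 0 the n-th constraint forces ||x|| < 1; otherwise ||x|| = 0. *)
Lemma ball_set_in_ball (x : X) : ball_set psi x -> vnorm x < 1.
Proof.
  intros Hx. destruct (classic (exists n, 0 < psi n x)) as [[n Hn]|Hn].
  - specialize (Hx n). pose proof (weight_bounds n) as [w0 w1].
    pose proof (Rmult_lt_0_compat _ _ w0 Hn). lra.
  - rewrite (adm_separating X psi Hpsi x); [lra|].
    intros n. apply Rnot_lt_le. intros H. apply Hn. eauto.
Qed.

Lemma ball_set_scaled_point (N : nat) (u : X) :
  vnorm u = 1 -> (forall n, (n < N)%nat -> psi n u = 0) ->
  ball_set psi (vscal (1 - weight N) u).
Proof.
  intros Hu Hzero n. pose proof (weight_bounds N) as [wN0 wN1].
  set (t := 1 - weight N).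
  assert (Hxn : vnorm (vscal t u) = t) by (rewrite vnorm_scal, Hu, Rabs_pos_eq; unfold t; lra).
  rewrite Hxn. destruct (lt_dec n N) as [Hn|Hn].
  - (* psi_n(t u) <= t psi_n(u) + (1 - t) psi_n(0) = 0 by convexity. *)
    assert (psi n (vscal t u) = 0) as ->; [|unfold t; lra].
    apply Rle_antisym; [|apply (adm_nonneg X psi Hpsi)].
    pose proof (adm_convex X psi Hpsi n u vzero t ltac:(unfold t; lra)) as C.
    rewrite vscal_0r, vadd_0, Hzero in C by lia.
    pose proof (adm_le_norm X psi Hpsi n vzero) as Z. rewrite vnorm_0 in Z.
    unfold t in *. nra.
  - pose proof (adm_le_norm X psi Hpsi n (vscal t u)) as A. rewrite Hxn in A.
    pose proof (weight_bounds n) as [w0 w1].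
    pose proof (weight_antitone N n ltac:(lia)).
    pose proof (adm_nonneg X psi Hpsi n (vscal t u)).
    assert (weight n * psi n (vscal t u) <= weight N * t)
      by (apply Rmult_le_compat; lra).
    unfold t in *. nra.
Qed.

Lemma ball_set_sup : is_lub (fun r => exists x, ball_set psi x /\ r = vnorm x) 1.
Proof.
  split.
  - intros r [x [Hx ->]]. left. apply ball_set_in_ball; auto.
  - intros b Hb. apply Rnot_lt_le. intros Hb1.
    destruct (weight_small (1 - b)) as [N HN]; [lra|].
    destruct (adm_common_zero X psi Hpsi N) as [u [Hu Hzero]].
    pose proof (weight_bounds N) as [w0 w1].
    assert (Hmem : 1 - weight N <= b).
    { apply Hb. exists (vscal (1 - weight N) u).
      split; [apply ball_set_scaled_point; auto|].
      rewrite vnorm_scal, Hu, Rabs_pos_eq; lra. }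
    lra.
Qed.

Theorem ball_set_spec :
  is_closed X (ball_set psi) /\ is_convex X (ball_set psi) /\
  (forall x, ball_set psi x -> vnorm x < 1) /\
  is_lub (fun r => exists x, ball_set psi x /\ r = vnorm x) 1.
Proof.
  split; [apply ball_set_closed|].
  split; [apply ball_set_convex|].
  split; [apply ball_set_in_ball|apply ball_set_sup].
Qed.

End BallSet.

(* Hahn-Banach theorem for subspaces spanned by a countable family: a norming
   functional of norm at most 1 is built by adjoining one vector at a time. *)

Section Subspaces.
Context {X : BanachSpace}.

Definition subspace (M : X -> Prop) : Prop :=
  M vzero /\ (forall x y, M x -> M y -> M (vadd x y)) /\ (forall a x, M x -> M (vscal a x)).

Definition linear_on (M : X -> Prop) (f : X -> R) : Prop :=
  (forall x y, M x -> M y -> f (vadd x y) = f x + f y) /\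
  (forall a x, M x -> f (vscal a x) = a * f x).

Definition norm_bounded (M : X -> Prop) (f : X -> R) : Prop :=
  linear_on M f /\ forall x, M x -> f x <= vnorm x.

Lemma subspace_sub (M : X -> Prop) x y : subspace M -> M x -> M y -> M (vsub x y).
Proof. intros [H0 [Ha Hs]] Hx Hy. unfold vsub. rewrite vopp_scal. auto. Qed.

Lemma linear_0 (M : X -> Prop) f : subspace M -> linear_on M f -> f vzero = 0.
Proof. intros [H0 _] [_ Hs]. rewrite <- (vscal_0l (@vzero X)), Hs; auto. ring. Qed.

Lemma linear_opp (M : X -> Prop) f x : linear_on M f -> M x -> f (vopp x) = - f x.
Proof. intros [_ Hs] Hx. rewrite vopp_scal, Hs; auto. ring. Qed.

Lemma linear_sub (M : X -> Prop) f x y : subspace M -> linear_on M f -> M x -> M y ->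
  f (vsub x y) = f x - f y.
Proof.
  intros HM Hl Hx Hy. pose proof HM as [_ [_ Hs]].
  unfold vsub. rewrite (proj1 Hl), (linear_opp M f y); auto.
  rewrite vopp_scal; auto.
Qed.

Lemma norm_bounded_abs (M : X -> Prop) f x : subspace M -> norm_bounded M f -> M x ->
  Rabs (f x) <= vnorm x.
Proof.
  intros HM [Hl Hb] Hx. pose proof HM as [_ [_ Hs]]. unfold Rabs. destruct Rcase_abs.
  - rewrite <- (linear_opp M f x), <- (vnorm_opp x); auto. apply Hb.
    rewrite vopp_scal; auto.
  - auto.
Qed.

Definition adjoin (M : X -> Prop) (z : X) : X -> Prop :=
  fun x => exists m t, M m /\ x = vadd m (vscal t z).

Lemma adjoin_subspace (M : X -> Prop) z : subspace M -> subspace (adjoin M z).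
Proof.
  intros [H0 [Ha Hs]]. split; [|split].
  - exists vzero, 0. split; auto. rewrite vscal_0l, vadd_0. reflexivity.
  - intros x y [m1 [t1 [Hm1 ->]]] [m2 [t2 [Hm2 ->]]].
    exists (vadd m1 m2), (t1 + t2). split; auto.
    rewrite vadd_swap4, vscal_distr_s. reflexivity.
  - intros a x [m [t [Hm ->]]]. exists (vscal a m), (a * t). split; auto.
    rewrite vscal_distr_v, vscal_assoc. reflexivity.
Qed.

Lemma adjoin_incl (M : X -> Prop) z m : M m -> adjoin M z m.
Proof. intros H. exists m, 0. split; auto. rewrite vscal_0l, vadd_0. reflexivity. Qed.

Lemma adjoin_new (M : X -> Prop) z : M vzero -> adjoin M z z.
Proof. intros H. exists vzero, 1. split; auto. rewrite vscal_1, vadd_0l. reflexivity. Qed.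

Lemma adjoin_coord_unique (M : X -> Prop) z m1 m2 t1 t2 :
  subspace M -> ~ M z -> M m1 -> M m2 -> vadd m1 (vscal t1 z) = vadd m2 (vscal t2 z) ->
  m1 = m2 /\ t1 = t2.
Proof.
  intros HM Hz H1 H2 He. destruct (Req_dec t1 t2) as [<-|Ht].
  - split; auto. rewrite !(vadd_comm _ (vscal t1 z)) in He.
    eapply vadd_cancel_l; eauto.
  - exfalso. apply Hz.
    assert (Hk : vscal (t1 - t2) z = vsub m2 m1).
    { apply (vadd_cancel_l (vadd m1 (vscal t2 z))).
      rewrite <- vadd_assoc, <- vscal_distr_s.
      replace (t2 + (t1 - t2)) with t1 by ring.
      rewrite He, vadd_rcomm, vadd_sub. reflexivity. }
    replace z with (vscal (/ (t1 - t2)) (vsub m2 m1)).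
    + pose proof HM as [_ [_ Hs]]. apply Hs, subspace_sub; auto.
    + rewrite <- Hk, vscal_assoc, Rinv_l, vscal_1; auto. lra.
Qed.

Definition adjoin_fun (M : X -> Prop) (z : X) (f : X -> R) (c : R) (x : X) : R :=
  match excluded_middle_informative
          (exists p : X * R, M (fst p) /\ x = vadd (fst p) (vscal (snd p) z)) with
  | left H => let p := proj1_sig (constructive_indefinite_description _ H) in
              f (fst p) + snd p * c
  | right _ => 0
  end.

Lemma adjoin_fun_eq (M : X -> Prop) z f c m t :
  subspace M -> ~ M z -> M m -> adjoin_fun M z f c (vadd m (vscal t z)) = f m + t * c.
Proof.
  intros HM Hz Hm. unfold adjoin_fun.
  destruct excluded_middle_informative as [H|H].
  - destruct constructive_indefinite_description as [[m' t'] [Hm' He]]. simpl in *.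
    destruct (adjoin_coord_unique M z m m' t t') as [-> ->]; auto.
  - exfalso. apply H. exists (m, t). simpl. auto.
Qed.

(* Scaling the upper constraint on c from z to t z, t > 0. *)
Lemma dominated_ray (M : X -> Prop) f z c : subspace M -> linear_on M f ->
  (forall m, M m -> c <= vnorm (vadd m z) - f m) ->
  forall m t, M m -> 0 < t -> f m + t * c <= vnorm (vadd m (vscal t z)).
Proof.
  intros [_ [_ Hs]] [_ Hls] Hc m t Hm Ht.
  pose proof (Hc _ (Hs (/ t) m Hm)) as A. rewrite Hls in A; auto.
  replace (vadd m (vscal t z)) with (vscal t (vadd (vscal (/ t) m) z))
    by (rewrite vscal_distr_v, vscal_assoc, Rinv_r, vscal_1 by lra; reflexivity).
  rewrite vnorm_scal, Rabs_pos_eq by lra.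
  apply (Rmult_le_compat_l t) in A; [|lra].
  replace (t * (vnorm (vadd (vscal (/ t) m) z) - / t * f m))
    with (t * vnorm (vadd (vscal (/ t) m) z) - f m) in A by (field; lra).
  lra.
Qed.

Lemma adjoin_fun_dominated (M : X -> Prop) f z c : subspace M -> ~ M z ->
  norm_bounded M f ->
  (forall m, M m -> f m - vnorm (vsub m z) <= c) ->
  (forall m, M m -> c <= vnorm (vadd m z) - f m) ->
  forall x, adjoin M z x -> adjoin_fun M z f c x <= vnorm x.
Proof.
  intros HM Hz [Hl Hb] Hlow Hup x [m [t [Hm ->]]]. rewrite adjoin_fun_eq; auto.
  destruct (Rtotal_order t 0) as [Ht|[->|Ht]].
  - (* t z = (-t)(-z), and the lower constraint is the upper one for -z, -c. *)
    replace (vscal t z) with (vscal (- t) (vopp z))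
      by (rewrite vopp_scal, vscal_assoc; f_equal; ring).
    replace (f m + t * c) with (f m + - t * - c) by ring.
    apply (dominated_ray M f (vopp z) (- c)); auto; [|lra].
    intros m' Hm'. specialize (Hlow m' Hm'). unfold vsub in Hlow. lra.
  - rewrite vscal_0l, vadd_0, Rmult_0_l, Rplus_0_r. auto.
  - apply (dominated_ray M); auto.
Qed.

Lemma hb_one_step (M : X -> Prop) f z c : subspace M -> norm_bounded M f ->
  (forall m, M m -> f m - vnorm (vsub m z) <= c) ->
  (forall m, M m -> c <= vnorm (vadd m z) - f m) ->
  exists g, norm_bounded (adjoin M z) g /\ (forall m, M m -> g m = f m) /\ g z = c.
Proof.
  intros HM Hf Hlow Hup. pose proof HM as [H0 [Ha Hs]].
  destruct (classic (M z)) as [Hz|Hz].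
  - (* z in M: the extension is f itself, and the constraints force c = f z. *)
    assert (Hsub : forall x, adjoin M z x -> M x) by (intros x [m [t [Hm ->]]]; auto).
    destruct Hf as [[Hla Hls] Hb].
    exists f. split; [split; [split|]|split]; auto.
    pose proof (Hlow z Hz) as A. rewrite vsub_self, vnorm_0 in A.
    assert (Hoz : M (vopp z)) by (rewrite vopp_scal; auto).
    pose proof (Hup (vopp z) Hoz) as B. rewrite vadd_opp_l, vnorm_0 in B.
    rewrite (linear_opp M f z) in B; [lra|split|]; auto.
  - exists (adjoin_fun M z f c). destruct Hf as [[Hla Hls] Hb].
    split; [split; [split|]|split].
    + intros x y [m1 [t1 [Hm1 ->]]] [m2 [t2 [Hm2 ->]]].
      rewrite vadd_swap4, <- vscal_distr_s, !adjoin_fun_eq, Hla; auto. ring.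
    + intros a x [m [t [Hm ->]]].
      rewrite vscal_distr_v, vscal_assoc, !adjoin_fun_eq, Hls; auto. ring.
    + apply adjoin_fun_dominated; repeat split; auto.
    + intros m Hm. rewrite <- (vadd_0 m), <- (vscal_0l z), adjoin_fun_eq; auto.
      rewrite vscal_0l, vadd_0. ring.
    + pose proof (adjoin_fun_eq M z f c vzero 1 HM Hz H0) as E.
      rewrite vscal_1, vadd_0l in E. rewrite E, (linear_0 M f); [ring|auto|split; auto].
Qed.

(* The two constraints on c are compatible, by the triangle inequality. *)
Lemma hb_gap (M : X -> Prop) f z : subspace M -> norm_bounded M f ->
  exists c, (forall m, M m -> f m - vnorm (vsub m z) <= c) /\
            (forall m, M m -> c <= vnorm (vadd m z) - f m).
Proof.
  intros HM [Hl Hb]. pose proof HM as [H0 [Ha Hs]].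
  assert (Key : forall m m', M m -> M m' ->
            f m - vnorm (vsub m z) <= vnorm (vadd m' z) - f m').
  { intros m m' Hm Hm'.
    assert (E : vadd m m' = vadd (vsub m z) (vadd m' z)).
    { unfold vsub. rewrite vadd_swap4, vadd_opp_l, vadd_0. reflexivity. }
    pose proof (Hb _ (Ha _ _ Hm Hm')) as B. rewrite (proj1 Hl), E in B; auto.
    pose proof (vnorm_triangle (vsub m z) (vadd m' z)). lra. }
  set (E := fun r => exists m, M m /\ r = f m - vnorm (vsub m z)).
  assert (Hbd : bound E).
  { exists (vnorm (vadd vzero z) - f vzero). intros r [m [Hm ->]]. auto. }
  assert (Hne : exists r, E r) by (exists (f vzero - vnorm (vsub vzero z)), vzero; auto).
  destruct (completeness E Hbd Hne) as [c [Hub Hlub]].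
  exists c. split.
  - intros m Hm. apply Hub. exists m. auto.
  - intros m' Hm'. apply Hlub. intros r [m [Hm ->]]. auto.
Qed.

End Subspaces.

Inductive span {X : BanachSpace} (gen : nat -> X) : X -> Prop :=
| span_0 : span gen vzero
| span_gen j : span gen (gen j)
| span_add x y : span gen x -> span gen y -> span gen (vadd x y)
| span_scal a x : span gen x -> span gen (vscal a x).

Lemma span_subspace {X : BanachSpace} (gen : nat -> X) : subspace (span gen).
Proof. split; [constructor|split; intros; constructor; auto]. Qed.

Section CountableHahnBanach.
Context {X : BanachSpace} (gen : nat -> X) (d : X).

Definition chain_vector (j : nat) : X := match j with O => d | S i => gen i end.

Fixpoint chain_space (k : nat) : X -> Prop :=
  match k with
  | O => fun x => x = vzero
  | S j => adjoin (chain_space j) (chain_vector j)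
  end.

Lemma chain_subspace (k : nat) : subspace (chain_space k).
Proof.
  induction k as [|k IH]; simpl; [|apply adjoin_subspace; auto].
  split; [reflexivity|split].
  - intros x y -> ->. apply vadd_0.
  - intros a x ->. apply vscal_0r.
Qed.

Lemma chain_mono (j k : nat) x : (j <= k)%nat -> chain_space j x -> chain_space k x.
Proof. induction 1 as [|k _ IH]; auto. intros Hx. apply adjoin_incl, IH, Hx. Qed.

Lemma span_in_chain x : span gen x -> exists k, chain_space k x.
Proof.
  induction 1 as [| j | x y _ [k1 H1] _ [k2 H2] | a x _ [k H]].
  - exists O. reflexivity.
  - exists (S (S j)). apply (adjoin_new _ (gen j)), (chain_subspace (S j)).
  - exists (max k1 k2). pose proof (chain_subspace (max k1 k2)) as [_ [Ha _]].
    apply Ha; [apply (chain_mono k1)|apply (chain_mono k2)]; auto; lia.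
  - exists k. pose proof (chain_subspace k) as [_ [_ Hs]]. auto.
Qed.

Lemma chain_step (k : nat) f : norm_bounded (chain_space k) f ->
  exists g, norm_bounded (chain_space (S k)) g /\
            (forall x, chain_space k x -> g x = f x) /\ (k = O -> g d = vnorm d).
Proof.
  intros Hf. pose proof (chain_subspace k) as HM.
  destruct k as [|k].
  - destruct (hb_one_step (chain_space 0) f d (vnorm d)) as [g [Hg [Hagree Hd]]]; auto.
    + intros m ->. rewrite (linear_0 _ f HM (proj1 Hf)).
      pose proof (vnorm_nonneg (vsub vzero d)). pose proof (vnorm_nonneg d). lra.
    + intros m ->. rewrite (linear_0 _ f HM (proj1 Hf)), vadd_0l. lra.
    + exists g. auto.
  - destruct (hb_gap (chain_space (S k)) f (chain_vector (S k))) as [c [Hlow Hup]]; auto.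
    destruct (hb_one_step (chain_space (S k)) f (chain_vector (S k)) c)
      as [g [Hg [Hagree _]]]; auto.
    exists g. split; [|split]; auto. discriminate.
Qed.

Lemma chain_extensions : exists F : nat -> X -> R,
  (forall k, norm_bounded (chain_space k) (F k) /\
             forall x, chain_space k x -> F (S k) x = F k x) /\
  F 1%nat d = vnorm d.
Proof.
  destruct (choice (fun (p : nat * (X -> R)) g =>
              norm_bounded (chain_space (fst p)) (snd p) ->
              norm_bounded (chain_space (S (fst p))) g /\
              (forall x, chain_space (fst p) x -> g x = snd p x) /\
              (fst p = O -> g d = vnorm d))) as [step Hstep].
  { intros [k f]. destruct (classic (norm_bounded (chain_space k) f)) as [Hf|Hf].
    - destruct (chain_step k f Hf) as [g Hg]. exists g. auto.
    - exists f. intros Hf'. contradiction. }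
  set (F := nat_rect (fun _ => X -> R) (fun _ => 0) (fun k f => step (k, f))).
  assert (HF : forall k, norm_bounded (chain_space k) (F k)).
  { induction k as [|k IH].
    - split; [split; intros; simpl; ring|]. intros x _. apply vnorm_nonneg.
    - apply (Hstep (k, F k)), IH. }
  exists F. split.
  - intros k. split; auto. intros x Hx. apply (Hstep (k, F k)); auto.
  - apply (Hstep (O, F O)); auto.
Qed.

Theorem hahn_banach_span : exists f, norm_bounded (span gen) f /\ f d = vnorm d.
Proof.
  destruct chain_extensions as [F [HF Hd]].
  assert (Hagree : forall j k x, (j <= k)%nat -> chain_space j x -> F k x = F j x).
  { intros j k x Hjk. induction Hjk as [|k Hjk IH]; auto. intros Hx.
    rewrite (proj2 (HF k)), IH; auto. apply (chain_mono j); auto. }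
  (* The limit functional: its value at x is F k x for any k with x in the k-th space. *)
  destruct (choice (fun x r => forall k, chain_space k x -> r = F k x)) as [f Hf].
  { intros x. destruct (classic (exists k, chain_space k x)) as [[k0 Hk0]|Hno].
    - exists (F k0 x). intros k Hk. destruct (le_ge_dec k0 k).
      + symmetry. apply Hagree; auto.
      + apply Hagree; auto.
    - exists 0. intros k Hk. exfalso. eauto. }
  assert (Hcommon : forall x y, span gen x -> span gen y ->
            exists k, chain_space k x /\ chain_space k y).
  { intros x y Hx Hy.
    destruct (span_in_chain x Hx) as [k1 H1], (span_in_chain y Hy) as [k2 H2].
    exists (max k1 k2). split; [apply (chain_mono k1)|apply (chain_mono k2)]; auto; lia. }
  exists f. split; [split; [split|]|].
  - intros x y Hx Hy. destruct (Hcommon x y Hx Hy) as [k [H1 H2]].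
    pose proof (chain_subspace k) as [_ [Ha _]].
    rewrite !(Hf _ k); auto. apply (HF k); auto.
  - intros a x Hx. destruct (span_in_chain x Hx) as [k H1].
    pose proof (chain_subspace k) as [_ [_ Hs]].
    rewrite !(Hf _ k); auto. apply (HF k); auto.
  - intros x Hx. destruct (span_in_chain x Hx) as [k H1].
    rewrite (Hf _ k); auto. apply (HF k); auto.
  - rewrite (Hf _ 1%nat); auto. apply adjoin_new. reflexivity.
Qed.

End CountableHahnBanach.

(* The infimal convolution of |f| (f linear on the subspace S) with the norm,
     infconv S f x = inf_{v in S} |f v| + ||x - v||,
   a convex 1-Lipschitz function on X below the norm, vanishing on ker f. *)

Section InfimalConvolution.
Context {X : BanachSpace} (S : X -> Prop) (f : X -> R).
Hypothesis HS : subspace S.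
Hypothesis Hlin : linear_on S f.

Definition infconv_values (x : X) : R -> Prop :=
  fun r => exists v, S v /\ r = - (Rabs (f v) + vnorm (vsub x v)).

Lemma infconv_values_bound (x : X) : bound (infconv_values x).
Proof.
  exists 0. intros r [v [_ ->]].
  pose proof (Rabs_pos (f v)); pose proof (vnorm_nonneg (vsub x v)); lra.
Qed.

Definition infconv (x : X) : R :=
  match excluded_middle_informative (exists r, infconv_values x r) with
  | left H => - proj1_sig (completeness (infconv_values x) (infconv_values_bound x) H)
  | right _ => 0
  end.

Lemma infconv_spec (x : X) :
  (forall v, S v -> infconv x <= Rabs (f v) + vnorm (vsub x v)) /\
  (forall b, (forall v, S v -> b <= Rabs (f v) + vnorm (vsub x v)) -> b <= infconv x).
Proof.
  pose proof HS as [H0 _]. unfold infconv.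
  destruct excluded_middle_informative as [H|H].
  - destruct completeness as [c [Hub Hl]]. simpl. split.
    + intros v Hv.
      assert (- (Rabs (f v) + vnorm (vsub x v)) <= c) by (apply Hub; exists v; auto). lra.
    + intros b Hb. assert (c <= - b); [|lra]. apply Hl. intros r [v [Hv ->]].
      specialize (Hb v Hv). lra.
  - exfalso. apply H. eexists. exists vzero. split; eauto.
Qed.

Lemma infconv_le (x v : X) : S v -> infconv x <= Rabs (f v) + vnorm (vsub x v).
Proof. apply infconv_spec. Qed.

Lemma infconv_ge (x : X) b :
  (forall v, S v -> b <= Rabs (f v) + vnorm (vsub x v)) -> b <= infconv x.
Proof. apply infconv_spec. Qed.

Lemma infconv_nonneg (x : X) : 0 <= infconv x.
Proof.
  apply infconv_ge. intros v _.
  pose proof (Rabs_pos (f v)); pose proof (vnorm_nonneg (vsub x v)); lra.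
Qed.

Lemma infconv_approx (x : X) eps : 0 < eps ->
  exists v, S v /\ Rabs (f v) + vnorm (vsub x v) < infconv x + eps.
Proof.
  intros He. apply NNPP. intros Hn.
  assert (infconv x + eps <= infconv x); [|lra].
  apply infconv_ge. intros v Hv. apply Rnot_lt_le. intros Hlt. apply Hn. eauto.
Qed.

Lemma infconv_lipschitz (x y : X) : infconv x <= infconv y + vnorm (vsub x y).
Proof.
  assert (infconv x - vnorm (vsub x y) <= infconv y); [|lra].
  apply infconv_ge. intros v Hv.
  pose proof (infconv_le x v Hv). pose proof (norm_sub_tri x y v). lra.
Qed.

Lemma infconv_le_norm (x : X) : infconv x <= vnorm x.
Proof.
  pose proof HS as [H0 _]. pose proof (infconv_le x vzero H0) as A.
  rewrite (linear_0 S f HS Hlin), Rabs_R0, vsub_0r in A. lra.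
Qed.

Lemma infconv_kernel (y : X) : S y -> f y = 0 -> infconv y = 0.
Proof.
  intros Hy Hf. apply Rle_antisym; [|apply infconv_nonneg].
  pose proof (infconv_le y y Hy) as A.
  rewrite Hf, Rabs_R0, vsub_self, vnorm_0 in A. lra.
Qed.

Lemma infconv_convex (x y : X) t : 0 <= t <= 1 ->
  infconv (vadd (vscal t x) (vscal (1 - t) y)) <= t * infconv x + (1 - t) * infconv y.
Proof.
  intros Ht. pose proof HS as [H0 [Ha Hs]]. apply le_eps. intros eps He.
  destruct (infconv_approx x eps He) as [v [Hv Av]].
  destruct (infconv_approx y eps He) as [w [Hw Aw]].
  (* The convex combination of near-optimal v and w is a competitor for the combination. *)
  set (u := vadd (vscal t v) (vscal (1 - t) w)).
  pose proof (infconv_le (vadd (vscal t x) (vscal (1 - t) y)) u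
                ltac:(unfold u; auto)) as A.
  assert (Ef : f u = t * f v + (1 - t) * f w).
  { unfold u. destruct Hlin as [Hla Hls]. rewrite Hla, !Hls; auto. }
  assert (Ev : vsub (vadd (vscal t x) (vscal (1 - t) y)) u =
               vadd (vscal t (vsub x v)) (vscal (1 - t) (vsub y w))).
  { unfold u. rewrite vsub_add, !vsub_scal. reflexivity. }
  rewrite Ev, Ef in A.
  pose proof (norm_convex t (1 - t) (vsub x v) (vsub y w) ltac:(lra) ltac:(lra)) as N.
  assert (Rabs (t * f v + (1 - t) * f w) <= t * Rabs (f v) + (1 - t) * Rabs (f w)).
  { eapply Rle_trans; [apply Rabs_triang|].
    rewrite !Rabs_mult, (Rabs_pos_eq t), (Rabs_pos_eq (1 - t)) by lra. lra. }
  nra.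
Qed.

Lemma infconv_norming (d x : X) : norm_bounded S f -> S d -> f d = vnorm d ->
  vnorm d - vnorm (vsub d x) <= infconv x.
Proof.
  intros Hb Hd Hfd. apply infconv_ge. intros v Hv.
  pose proof (norm_bounded_abs S f (vsub d v) HS Hb (subspace_sub S d v HS Hd Hv)) as A.
  rewrite (linear_sub S f d v HS Hlin Hd Hv) in A.
  pose proof (norm_sub_tri d x v).
  pose proof (Rle_abs (f d - f v)). pose proof (Rle_abs (f v)). lra.
Qed.

End InfimalConvolution.

(* Linear algebra: m homogeneous equations in the m+1 unknowns c_0, ..., c_m
   have a nontrivial solution; hence N linear functionals vanish together on a
   nonzero combination of N+1 independent vectors. *)

Definition nontrivial (m : nat) (c : nat -> R) : Prop := exists i, (i <= m)%nat /\ c i <> 0.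

Definition solves_system (m : nat) (A : nat -> nat -> R) (c : nat -> R) : Prop :=
  forall j, (j < m)%nat -> sum_f_R0 (fun i => A j i * c i) m = 0.

(* Elimination of the last unknown with a pivot row r. *)
Lemma homogeneous_pivot (m r : nat) (A : nat -> nat -> R) :
  (forall B, exists c, nontrivial m c /\ solves_system m B c) ->
  (r < S m)%nat -> A r (S m) <> 0 ->
  exists c, nontrivial (S m) c /\ solves_system (S m) A c.
Proof.
  intros IH Hr Hp.
  (* The rows other than r, row m being moved to position r. *)
  set (row := fun j => if Nat.eq_dec j r then m else j).
  set (B := fun j i => A (row j) i - A (row j) (S m) / A r (S m) * A r i).
  destruct (IH B) as [c' [[i0 [Hi0 Hc0]] Hc']].
  set (sr := sum_f_R0 (fun i => A r i * c' i) m).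
  exists (fun i => if Nat.eq_dec i (S m) then - sr / A r (S m) else c' i). split.
  { exists i0. split; [lia|]. destruct (Nat.eq_dec i0 (S m)); [lia|auto]. }
  intros j Hj. rewrite tech5. cbv beta.
  destruct (Nat.eq_dec (S m) (S m)) as [_|]; [|lia].
  rewrite (sum_eq _ (fun i => A j i * c' i))
    by (intros i Hi; destruct (Nat.eq_dec i (S m)); [lia|auto]).
  destruct (Nat.eq_dec j r) as [->|Hjr]; [fold sr; field; auto|].
  (* Row j of A is row j0 of the reduced system. *)
  set (j0 := if Nat.eq_dec j m then r else j).
  assert (Hj0 : (j0 < m)%nat) by (unfold j0; destruct (Nat.eq_dec j m); lia).
  assert (Hrow : row j0 = j).
  { unfold row, j0. destruct (Nat.eq_dec j m) as [->|Hjm].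
    - destruct (Nat.eq_dec r r); [auto|lia].
    - destruct (Nat.eq_dec j r); [lia|auto]. }
  pose proof (Hc' j0 Hj0) as E. unfold B in E. rewrite Hrow in E.
  rewrite (sum_eq _ (fun i => A j i * c' i - (A r i * c' i) * (A j (S m) / A r (S m)))) in E
    by (intros; ring).
  rewrite minus_sum, <- scal_sum in E. fold sr in E.
  assert (E2 : sum_f_R0 (fun i => A j i * c' i) m = A j (S m) / A r (S m) * sr) by lra.
  rewrite E2. field. auto.
Qed.

(* Without a pivot the last unit vector is a solution. *)
Lemma homogeneous_no_pivot (m : nat) (A : nat -> nat -> R) :
  (forall r, (r < S m)%nat -> A r (S m) = 0) ->
  exists c, nontrivial (S m) c /\ solves_system (S m) A c.
Proof.
  intros Hno. exists (fun i => if Nat.eq_dec i (S m) then 1 else 0). split.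
  - exists (S m). split; auto. destruct (Nat.eq_dec (S m) (S m)); [lra|lia].
  - intros j Hj. rewrite tech5. cbv beta.
    rewrite (sum_eq _ (fun _ => 0))
      by (intros i Hi; destruct (Nat.eq_dec i (S m)); [lia|ring]).
    rewrite sum_cte. destruct (Nat.eq_dec (S m) (S m)); [|lia].
    rewrite Hno; auto. ring.
Qed.

Lemma homogeneous_solvable (m : nat) (A : nat -> nat -> R) :
  exists c, nontrivial m c /\ solves_system m A c.
Proof.
  revert A. induction m as [|m IH]; intros A.
  - exists (fun _ => 1). split; [exists O; split; [lia|lra]|intros j Hj; lia].
  - destruct (classic (exists r, (r < S m)%nat /\ A r (S m) <> 0)) as [[r [Hr Hp]]|Hno].
    + apply (homogeneous_pivot m r); auto.
    + apply homogeneous_no_pivot. intros r Hr.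
      apply NNPP. intros Hne. apply Hno. eauto.
Qed.

Definition independent {X : BanachSpace} (n : nat) (v : nat -> X) : Prop :=
  forall c : nat -> R, lin_comb X c v n = vzero -> forall i, (i < n)%nat -> c i = 0.

Lemma lin_comb_in {X : BanachSpace} (M : X -> Prop) c v n : subspace M ->
  (forall i, M (v i)) -> M (lin_comb X c v n).
Proof. intros [H0 [Ha Hs]] Hv. induction n; simpl; auto. Qed.

Lemma linear_lin_comb {X : BanachSpace} (M : X -> Prop) f c v n : subspace M ->
  linear_on M f -> (forall i, M (v i)) ->
  f (lin_comb X c v (S n)) = sum_f_R0 (fun i => f (v i) * c i) n.
Proof.
  intros HM Hl Hv. pose proof HM as [H0 [Ha Hs]]. pose proof Hl as [Hla Hls].
  induction n.
  - simpl. rewrite Hla, Hls, (linear_0 M f HM Hl); auto. ring.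
  - change (lin_comb X c v (S (S n)))
      with (vadd (lin_comb X c v (S n)) (vscal (c (S n)) (v (S n)))).
    rewrite Hla, Hls, IHn, tech5; try apply lin_comb_in; auto.
    ring.
Qed.

Lemma common_kernel_vector {X : BanachSpace} (M : X -> Prop) (phi : nat -> X -> R)
    (w : nat -> X) (N : nat) :
  subspace M -> (forall n, linear_on M (phi n)) -> (forall i, M (w i)) ->
  independent (S N) w ->
  exists y, M y /\ y <> vzero /\ forall n, (n < N)%nat -> phi n y = 0.
Proof.
  intros HM Hl Hw Hind.
  destruct (homogeneous_solvable N (fun j i => phi j (w i))) as [c [[i0 [Hi0 Hc0]] Hc]].
  exists (lin_comb X c w (S N)). split; [|split].
  - apply lin_comb_in; auto.
  - intros E. apply Hc0, (Hind c E). lia.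
  - intros n Hn. rewrite (linear_lin_comb M); auto.
Qed.

(* A countable dense subset of span gen: the values of all finite expressions
   built from gen by sums and rational multiples, enumerated via Cantor pairing. *)

Lemma IZR_as_nat_diff (z : Z) : IZR z = INR (Z.to_nat z) - INR (Z.to_nat (- z)).
Proof.
  rewrite !INR_IZR_INZ. destruct (Z.le_ge_cases 0 z).
  - replace (Z.of_nat (Z.to_nat z)) with z by lia.
    replace (Z.of_nat (Z.to_nat (- z))) with 0%Z by lia. simpl. ring.
  - replace (Z.of_nat (Z.to_nat z)) with 0%Z by lia.
    replace (Z.of_nat (Z.to_nat (- z))) with (- z)%Z by lia. rewrite opp_IZR. simpl. ring.
Qed.

Lemma rat_approx (a eta : R) : 0 < eta ->
  exists p q s, Rabs (a - (INR p - INR q) / INR (S s)) < eta.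
Proof.
  intros He. destruct (arch eta He) as [s Hs].
  set (n := INR (S s)). assert (Hn : 0 < n) by (apply lt_0_INR; lia).
  destruct (archimed (a * n)) as [A1 A2].
  exists (Z.to_nat (up (a * n))), (Z.to_nat (- up (a * n))), s.
  rewrite <- IZR_as_nat_diff. fold n. set (t := IZR (up (a * n))) in *.
  replace (a - t / n) with ((a * n - t) * / n) by (field; lra).
  rewrite Rabs_mult, (Rabs_pos_eq (/ n)) by (apply Rlt_le, Rinv_0_lt_compat; auto).
  rewrite Rabs_left1 by lra.
  assert (Hi : 0 < / n) by (apply Rinv_0_lt_compat; auto).
  apply Rle_lt_trans with (1 * / n); [|fold n in Hs; lra].
  apply Rmult_le_compat_r; lra.
Qed.

Section DenseSequence.
Context {X : BanachSpace} (gen : nat -> X).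

(* decode fuel n: the code n = <0, r> stands for gen r, <1, <a, b>> for a sum,
   <s + 2, <<p, q>, b>> for a rational multiple ((p - q)/(s + 1)) of code b. *)
Fixpoint decode (fuel n : nat) : X :=
  match fuel with
  | O => vzero
  | S fuel' =>
    match of_nat n with
    | (O, r) => gen r
    | (S O, r) => let (a, b) := of_nat r in vadd (decode fuel' a) (decode fuel' b)
    | (S (S s), r) =>
      let (a, b) := of_nat r in
      let (p, q) := of_nat a in
      vscal ((INR p - INR q) / INR (S s)) (decode fuel' b)
    end
  end.

Definition codable (x : X) : Prop :=
  exists n fuel0, forall fuel, (fuel0 <= fuel)%nat -> decode fuel n = x.

Lemma decode_span (fuel n : nat) : span gen (decode fuel n).
Proof.
  revert n. induction fuel; intros n; simpl; [constructor|].
  destruct (of_nat n) as [[|[|s]] r].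
  - constructor.
  - destruct (of_nat r). constructor; auto.
  - destruct (of_nat r) as [a b]. destruct (of_nat a). constructor; auto.
Qed.

Lemma codable_gen (r : nat) : codable (gen r).
Proof.
  exists (to_nat (O, r)), 1%nat. intros fuel Hf. destruct fuel; [lia|].
  cbn [decode]. rewrite cancel_of_to. reflexivity.
Qed.

Lemma codable_add (x y : X) : codable x -> codable y -> codable (vadd x y).
Proof.
  intros [a [fa Ha]] [b [fb Hb]]. exists (to_nat (1%nat, to_nat (a, b))), (S (max fa fb)).
  intros fuel Hf. destruct fuel; [lia|]. cbn [decode]. rewrite !cancel_of_to.
  rewrite Ha, Hb by lia. reflexivity.
Qed.

Lemma codable_scal (x : X) p q s : codable x ->
  codable (vscal ((INR p - INR q) / INR (S s)) x).
Proof.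
  intros [b [fb Hb]]. exists (to_nat (S (S s), to_nat (to_nat (p, q), b))), (S fb).
  intros fuel Hf. destruct fuel; [lia|]. cbn [decode]. rewrite !cancel_of_to.
  rewrite Hb by lia. reflexivity.
Qed.

Lemma codable_dense (x : X) : span gen x ->
  forall eps, 0 < eps -> exists y, codable y /\ vnorm (vsub x y) < eps.
Proof.
  induction 1 as [| j | x y _ IH1 _ IH2 | a x _ IH]; intros eps He.
  - exists (vscal ((INR 0 - INR 0) / INR 1) (gen O)).
    split; [apply codable_scal, codable_gen|].
    replace ((INR 0 - INR 0) / INR 1) with 0 by (simpl; field).
    rewrite vscal_0l, vsub_self, vnorm_0. auto.
  - exists (gen j). split; [apply codable_gen|]. rewrite vsub_self, vnorm_0. auto.
  - destruct (IH1 (eps / 2)) as [y1 [R1 N1]]; [lra|].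
    destruct (IH2 (eps / 2)) as [y2 [R2 N2]]; [lra|].
    exists (vadd y1 y2). split; [apply codable_add; auto|].
    rewrite vsub_add. eapply Rle_lt_trans; [apply vnorm_triangle|]. lra.
  - (* a x - q r = a (x - r) + (a - q) r with r close to x and q close to a. *)
    assert (Ha1 : 0 < Rabs a + 1) by (pose proof (Rabs_pos a); lra).
    destruct (IH (eps / (2 * (Rabs a + 1)))) as [r [Rr Nr]];
      [apply Rdiv_lt_0_compat; lra|].
    assert (Hr1 : 0 < vnorm r + 1) by (pose proof (vnorm_nonneg r); lra).
    destruct (rat_approx a (eps / (2 * (vnorm r + 1)))) as [p [q [s Hq]]];
      [apply Rdiv_lt_0_compat; lra|].
    set (qq := (INR p - INR q) / INR (S s)) in *.
    exists (vscal qq r). split; [apply codable_scal; auto|].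
    rewrite vsub_scal_diff. eapply Rle_lt_trans; [apply vnorm_triangle|].
    rewrite !vnorm_scal.
    assert (T1 : Rabs a * vnorm (vsub x r) < eps / 2).
    { apply Rle_lt_trans with ((Rabs a + 1) * vnorm (vsub x r)).
      - pose proof (vnorm_nonneg (vsub x r)). nra.
      - replace (eps / 2) with ((Rabs a + 1) * (eps / (2 * (Rabs a + 1)))) by (field; lra).
        apply Rmult_lt_compat_l; auto. }
    assert (T2 : Rabs (a - qq) * vnorm r < eps / 2).
    { apply Rle_lt_trans with (Rabs (a - qq) * (vnorm r + 1)).
      - pose proof (Rabs_pos (a - qq)). nra.
      - replace (eps / 2) with ((eps / (2 * (vnorm r + 1))) * (vnorm r + 1)) by (field; lra).
        apply Rmult_lt_compat_r; auto. }
    lra.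
Qed.

(* The n-th code, decoded with fuel given by a second Cantor coordinate. *)
Definition dense_seq (n : nat) : X := decode (fst (of_nat n)) (snd (of_nat n)).

Lemma dense_seq_span (n : nat) : span gen (dense_seq n).
Proof. apply decode_span. Qed.

Lemma dense_seq_dense (x : X) : span gen x ->
  forall eps, 0 < eps -> exists n, vnorm (vsub x (dense_seq n)) < eps.
Proof.
  intros Hx eps He. destruct (codable_dense x Hx eps He) as [y [[m [f0 Hy]] Hxy]].
  exists (to_nat (f0, m)). unfold dense_seq. rewrite cancel_of_to, Hy; auto.
Qed.

End DenseSequence.

(* An infinite dimensional space contains a countable family whose span has n
   independent vectors for every n: enumerate all the given finite families. *)
Lemma independent_families_in_span (X : BanachSpace) : infinite_dimensional X ->
  exists gen : nat -> X, forall n, exists w, (forall i, span gen (w i)) /\ independent n w.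
Proof.
  intros Hinf. destruct (choice _ Hinf) as [w Hw].
  exists (fun j => w (fst (of_nat j)) (snd (of_nat j))).
  intros n. exists (w n). split; [|exact (Hw n)].
  intros i. replace (w n i) with (w (fst (of_nat (to_nat (n, i)))) (snd (of_nat (to_nat (n, i)))))
    by (rewrite cancel_of_to; reflexivity).
  apply (span_gen (fun j => w (fst (of_nat j)) (snd (of_nat j)))).
Qed.

Lemma norming_functionals {X : BanachSpace} (gen : nat -> X) :
  exists phi : nat -> X -> R, forall n,
    norm_bounded (span gen) (phi n) /\ phi n (dense_seq gen n) = vnorm (dense_seq gen n).
Proof.
  apply (choice (fun n f =>
    norm_bounded (span gen) f /\ f (dense_seq gen n) = vnorm (dense_seq gen n))).
  intros n. apply hahn_banach_span.
Qed.

Section Gauges.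
Context {X : BanachSpace} (gen : nat -> X) (phi : nat -> X -> R).
Hypothesis Hphi : forall n,
  norm_bounded (span gen) (phi n) /\ phi n (dense_seq gen n) = vnorm (dense_seq gen n).

Definition gauge (n : nat) : X -> R := infconv (span gen) (phi n).

(* A point where all gauges vanish is close to span gen, hence close to some d_n;
   but the gauge of index n is at least about ||d_n|| near d_n. *)
Lemma gauges_separating (x : X) : (forall n, gauge n x <= 0) -> vnorm x = 0.
Proof.
  intros Hx. apply NNPP. intros Hne.
  pose proof (vnorm_nonneg x) as Hx0. set (delta := vnorm x) in *.
  assert (Hd : 0 < delta / 8) by lra.
  destruct (infconv_approx (span gen) (phi O) (span_subspace gen) x (delta / 8) Hd)
    as [v0 [Hv0 A0]].
  pose proof (Hx O) as P0. pose proof (Rabs_pos (phi O v0)).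
  destruct (dense_seq_dense gen v0 Hv0 (delta / 8) Hd) as [n Hn].
  pose proof (norm_sub_tri x v0 (dense_seq gen n)).
  destruct (Hphi n) as [Hb Hnorming].
  pose proof (infconv_norming (span gen) (phi n) (span_subspace gen) (proj1 Hb)
                (dense_seq gen n) x Hb (dense_seq_span gen n) Hnorming) as L.
  pose proof (Hx n) as Pn. unfold gauge in P0, Pn.
  pose proof (norm_le_sub x (dense_seq gen n)).
  rewrite (norm_sub_sym (dense_seq gen n) x) in L. unfold delta in *. lra.
Qed.

Hypothesis Hgen : forall n, exists w, (forall i, span gen (w i)) /\ independent n w.

(* The first N functionals vanish at a unit vector of span gen, and so do the gauges. *)
Lemma gauges_common_zero (N : nat) :
  exists u, vnorm u = 1 /\ forall n, (n < N)%nat -> gauge n u = 0.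
Proof.
  destruct (Hgen (S N)) as [w [Hw Hind]].
  destruct (common_kernel_vector (span gen) phi w N (span_subspace gen)
              (fun n => proj1 (proj1 (Hphi n))) Hw Hind) as [y [Hy [Hy0 Hker]]].
  pose proof (vnorm_pos y Hy0) as Hyp.
  exists (vscal (/ vnorm y) y). split.
  - rewrite vnorm_scal, Rabs_pos_eq by (apply Rlt_le, Rinv_0_lt_compat; auto).
    field. lra.
  - intros n Hn. destruct (Hphi n) as [[[_ Hls] _] _].
    apply infconv_kernel; [apply span_subspace | constructor; auto |].
    rewrite Hls, Hker; auto. ring.
Qed.

Lemma gauges_admissible : admissible X gauge.
Proof.
  pose proof (span_subspace gen) as HV.
  assert (Hlin : forall n, linear_on (span gen) (phi n)) by (intros n; apply Hphi).
  split; intros; unfold gauge.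
  - apply infconv_nonneg; auto.
  - apply infconv_le_norm; auto.
  - apply infconv_lipschitz; auto.
  - apply infconv_convex; auto.
  - apply gauges_separating; auto.
  - apply gauges_common_zero.
Qed.

End Gauges.

Lemma admissible_family_exists (X : BanachSpace) : infinite_dimensional X ->
  exists psi, admissible X psi.
Proof.
  intros Hinf.
  destruct (independent_families_in_span X Hinf) as [gen Hgen].
  destruct (norming_functionals gen) as [phi Hphi].
  exists (gauge gen phi). apply gauges_admissible; auto.
Qed.

Theorem corollary8 (X : BanachSpace) (Hinf : infinite_dimensional X) :
  exists K : X -> Prop,
    is_closed X K /\ is_convex X K /\
    (forall x, K x -> vnorm x < 1) /\
    is_lub (fun r => exists x, K x /\ r = vnorm x) 1.
Proof.
  destruct (admissible_family_exists X Hinf) as [psi Hpsi].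
  exists (ball_set psi). apply ball_set_spec; auto.
Qed.
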